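(* Let $S_{r,N}$ be an atomic exponential Puiseux semiring. Then $\mathsf{c}(S_{r,N})=0$ if $r\in\mathbb{N}$, and $\mathsf{c}(S_{r,N})=\max(\mathsf{n}(r),\mathsf{d}(r))^{\delta_0}$ if $r\notin\mathbb{N}$.
   Context: $\mathbb{N}=\{0,1,2,\dots\}$. A numerical monoid $N$ is an additive submonoid of $\mathbb{N}$ with finite complement in $\mathbb{N}$; let $s_0=0<s_1<\cdots$ be its elements and $\delta_0=s_1-s_0=s_1$ (the smallest positive element of $N$). For $r\in\mathbb{Q}_{>0}$ write $r=\mathsf{n}(r)/\mathsf{d}(r)$ in lowest terms. The exponential Puiseux semiring $S_{r,N}$ is the additive submonoid of $\mathbb{Q}_{\ge0}$ generated by $\{r^k:k\in N\}$ (equal to $\mathbb{N}$ if $r\in\mathbb{N}$; atomic for $r\notin\mathbb{N}$ iff $\mathsf{n}(r)>1$). For factorizations $z=\sum\alpha_a a$, $z'=\sum\beta_a a$ of an element of an atomic monoid, $\gcd(z,z')=\sum\min(\alpha_a,\beta_a)a$ and $\mathsf{d}(z,z')=\max(|z|,|z'|)-|\gcd(z,z')|$. The catenary degree $\mathsf{c}(x)$ is the least $n\in\mathbb{N}\cup\{\infty\}$ such that any two factorizations of $x$ are joined by a chain of factorizations of $x$ with consecutive distances at most $n$; $\mathsf{c}(M)=\sup_{x\in M}\mathsf{c}(x)$. *)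

From mathcomp Require Import all_boot all_order all_algebra.
Set Implicit Arguments. Unset Strict Implicit. Unset Printing Implicit Defensive.
Import Order.TTheory GRing.Theory Num.Theory.
Local Open Scope ring_scope.

Definition numerical_monoid (N : nat -> Prop) : Prop :=
  [/\ N 0%N, (forall a b, N a -> N b -> N (a + b)%N)
    & exists m : nat, forall n, (m <= n)%N -> N n].

Definition S_rN (r : rat) (N : nat -> Prop) (x : rat) : Prop :=
  exists s : seq nat, (forall k, k \in s -> N k) /\ x = \sum_(k <- s) r ^+ k.

Definition is_atom (M : rat -> Prop) (a : rat) : Prop :=
  [/\ M a, a != 0 & forall b c, M b -> M c -> a = b + c -> b = 0 \/ c = 0].

(* A factorization of x: a finite multiset (represented by a sequence,
   considered up to permutation) of atoms summing to x. *)
Definition is_factorization (M : rat -> Prop) (x : rat) (z : seq rat) : Prop :=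
  (forall a, a \in z -> is_atom M a) /\ \sum_(a <- z) a = x.

Definition atomic (M : rat -> Prop) : Prop :=
  forall x, M x -> exists z, is_factorization M x z.

Definition gcd_len (z z' : seq rat) : nat :=
  (\sum_(a <- undup z) minn (count_mem a z) (count_mem a z'))%N.

Definition fdist (z z' : seq rat) : nat :=
  (maxn (size z) (size z') - gcd_len z z')%N.

Definition n_chain (M : rat -> Prop) (x : rat) (n : nat) (z z' : seq rat) : Prop :=
  exists zs : seq (seq rat),
    (forall w, w \in zs -> is_factorization M x w) /\
    path (fun u v => fdist u v <= n)%N z zs /\ last z zs = z'.

Definition catenary_le (M : rat -> Prop) (n : nat) : Prop :=
  forall x z z', M x -> is_factorization M x z -> is_factorization M x z' ->
    n_chain M x n z z'.

Definition catenary_degree_eq (M : rat -> Prop) (v : nat) : Prop :=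
  catenary_le M v /\ forall n, catenary_le M n -> (v <= n)%N.

From mathcomp Require Import all_boot all_order all_algebra.
From mathcomp Require Import zify ring.
From Stdlib Require Import Classical.
Set Implicit Arguments. Unset Strict Implicit. Unset Printing Implicit Defensive.
Import Order.TTheory GRing.Theory Num.Theory.
Local Open Scope ring_scope.

(* A factorization in S_{r,N} is a multiset of generators r^k (k in N), which
   we handle through its sequence of exponents.  Write r = n/d in lowest terms;
   the basic relation is  n^m r^k = d^m r^(k+m).
   - If r is an integer, every atom is 1 and factorizations are unique: c = 0.
   - If n = 1, no generator is an atom, so S_{r,N} is not atomic.
   - Otherwise n, d > 1 and every generator is an atom.
     Upper bound: for r < 1 (resp. r > 1) trading d^m copies of r^k for n^m
     copies of r^(k-m) (resp. n^m copies of r^k for d^m copies of r^(k+m)),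
     with 0 < m <= dl, shortens a factorization by a move of length at most
     max(n,d)^dl.  Factorizations admitting no such move ("reduced") are
     unique: clearing denominators, the multiplicity of the extremal exponent
     is determined modulo a power of d (resp. n) exceeding it.  So any two
     factorizations are chained through their common reduced form.
     Lower bound: n^dl = n^dl * 1 = d^dl * r^dl, and n^dl * 1 is the only
     factorization of n^dl using the atom 1; some step of any chain leaves it
     for a factorization without 1, at distance at least max(n,d)^dl. *)

Lemma sum_count_undup (T : eqType) (s t : seq T) : {subset s <= t} ->
  (\sum_(a <- undup t) count_mem a s)%N = size s.
Proof.
elim: s => [|x s IH] sub /=; first by rewrite big1.
rewrite big_split /= IH; last by move=> y ys; apply: sub; rewrite inE ys orbT.
have xt : x \in undup t by rewrite mem_undup; apply: sub; rewrite inE eqxx.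
rewrite (bigD1_seq x) ?undup_uniq //= eqxx big1 ?addn0 ?add1n // => i.
by rewrite eq_sym => /negPf ->.
Qed.

Lemma gcd_len_perm_l (u u' v : seq rat) : perm_eq u u' -> gcd_len u v = gcd_len u' v.
Proof.
move=> p; rewrite /gcd_len.
have pu : perm_eq (undup u) (undup u').
  by apply: uniq_perm; rewrite ?undup_uniq // => x; rewrite !mem_undup (perm_mem p).
by rewrite (perm_big _ pu) /=; apply: eq_bigr => a _; rewrite (permP p).
Qed.

Lemma gcd_lenC (u v : seq rat) : gcd_len u v = gcd_len v u.
Proof.
have common w w' : gcd_len w w' =
    (\sum_(a <- [seq a <- undup w | a \in w']) minn (count_mem a w) (count_mem a w'))%N.
  rewrite /gcd_len big_filter [in RHS]big_mkcond /=; apply: eq_bigr => a _.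
  by case: ifP => // /negbT /count_memPn ->; rewrite minn0.
rewrite !common [in RHS](eq_bigr (fun a => minn (count_mem a u) (count_mem a v))); last first.
  by move=> a _; rewrite minnC.
apply: perm_big; apply: uniq_perm; rewrite ?filter_uniq ?undup_uniq // => x.
by rewrite !mem_filter !mem_undup andbC.
Qed.

Lemma fdistC (u v : seq rat) : fdist u v = fdist v u.
Proof. by rewrite /fdist maxnC gcd_lenC. Qed.

Lemma fdist_perm_l (u u' v : seq rat) : perm_eq u u' -> fdist u v = fdist u' v.
Proof. by move=> p; rewrite /fdist (perm_size p) (gcd_len_perm_l v p). Qed.

Lemma fdist_exchange (a b w : seq rat) :
  (fdist (a ++ w) (b ++ w) <= maxn (size a) (size b))%N.
Proof.
have common : (size w <= gcd_len (a ++ w) (b ++ w))%N.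
  rewrite /gcd_len -(@sum_count_undup _ w (a ++ w)); last first.
    by move=> x xw; rewrite mem_cat xw orbT.
  by apply: leq_sum => x _; rewrite leq_min !count_cat !leq_addl.
rewrite /fdist !size_cat; move: common; rewrite !maxnE; lia.
Qed.

Lemma fdist_perm (u v : seq rat) : perm_eq u v -> fdist u v = 0%N.
Proof.
move=> p; rewrite (fdist_perm_l v p); apply/eqP; rewrite -leqn0.
by have := fdist_exchange [::] [::] v.
Qed.

Lemma fdist_disjoint (u v : seq rat) : (forall x, x \in u -> x \notin v) ->
  fdist u v = maxn (size u) (size v).
Proof.
move=> disj; rewrite /fdist /gcd_len big1_seq ?subn0 // => x.
by rewrite mem_undup => /andP [_ /disj /count_memPn ->]; rewrite minn0.
Qed.

Section Chains.
Variables (M : rat -> Prop) (x : rat) (n : nat).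

Lemma chain_refl z : n_chain M x n z z.
Proof. by exists [::]. Qed.

Lemma chain_step z z' : is_factorization M x z' -> (fdist z z' <= n)%N ->
  n_chain M x n z z'.
Proof.
move=> fz' d; exists [:: z']; split => //=; last by rewrite d.
by move=> w; rewrite inE => /eqP ->.
Qed.

Lemma chain_trans z y z' : n_chain M x n z y -> n_chain M x n y z' -> n_chain M x n z z'.
Proof.
move=> [zs1 [f1 [p1 l1]]] [zs2 [f2 [p2 l2]]]; exists (zs1 ++ zs2); split; [|split].
- by move=> w; rewrite mem_cat => /orP [/f1|/f2].
- by rewrite cat_path p1 l1 p2.
- by rewrite last_cat l1.
Qed.

Lemma chain_sym z z' : is_factorization M x z -> n_chain M x n z z' -> n_chain M x n z' z.
Proof.
move=> fz [zs [f [p l]]]; elim: zs z fz f p l => [|y zs IH] z fz f p l.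
  by rewrite -l; apply: chain_refl.
move: p => /= /andP [d p].
have fy : is_factorization M x y by apply: f; rewrite inE eqxx.
apply: (chain_trans (y := y)); first by apply: IH => // w wi; apply: f; rewrite inE wi orbT.
by apply: chain_step => //; rewrite fdistC.
Qed.

End Chains.

Lemma path_exit (T : eqType) (e : rel T) (P : pred T) z zs :
  path e z zs -> P z -> ~~ P (last z zs) ->
  exists u v, [/\ P u, ~~ P v, u \in z :: zs, v \in zs & e u v].
Proof.
elim: zs z => [|y zs IH] z /=; first by move=> _ ->.
move=> /andP [ezy p] Pz nP; case Py: (P y); last by exists z, y; rewrite Py !inE !eqxx ?orbT.
have [u [v [Pu nPv uin vin euv]]] := IH y p Py nP.
by exists u, v; split => //; rewrite inE ?uin ?vin orbT.
Qed.

Lemma big_count_split (V : nmodType) (F : nat -> V) (s : seq nat) K :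
  \sum_(k <- s) F k = F K *+ count_mem K s + \sum_(k <- s | k != K) F k.
Proof.
rewrite (bigID (pred1 K)) /=; congr (_ + _).
by rewrite -sum1_count -sumrMnr; apply: eq_bigr => k /eqP ->.
Qed.

Lemma natmul_muln (x c : nat) : (x *+ c)%R = (x * c)%N.
Proof. by rewrite -mulr_natr natn. Qed.

Lemma perm_count_split (T : eqType) (s : seq T) K :
  perm_eq s (nseq (count_mem K s) K ++ [seq k <- s | k != K]).
Proof.
have <- : [seq k <- s | k == K] = nseq (count_mem K s) K.
  by elim: s => [|x s IH] //=; rewrite IH; case: eqP => [->|].
by rewrite perm_sym; have /permPl := perm_filterC (pred1 K) s.
Qed.

Lemma seq_max_in (s : seq nat) : s != [::] ->
  exists2 K, K \in s & forall k, k \in s -> (k <= K)%N.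
Proof.
case: s => [//|x s] _; have ex : exists k, k \in x :: s by exists x; rewrite mem_head.
have bd k : k \in x :: s -> (k <= \max_(j <- x :: s) j)%N by move=> ks; apply: leq_bigmax_seq.
by case: (ex_maxnP ex bd) => K; exists K.
Qed.

Lemma seq_min_in (s : seq nat) : s != [::] ->
  exists2 K, K \in s & forall k, k \in s -> (K <= k)%N.
Proof.
case: s => [//|x s] _; have ex : exists k, k \in x :: s by exists x; rewrite mem_head.
by case: (ex_minnP ex) => K; exists K.
Qed.

Lemma least_witness (P : nat -> Prop) m : P m -> exists j, P j /\ forall i, (i < j)%N -> ~ P i.
Proof.
elim/ltn_ind: m => m IH Pm.
case: (classic (exists i, (i < m)%N /\ P i)) => [[i [im Pi]]|none]; first exact: IH i im Pi.
by exists m; split => // i im Pi; apply: none; exists i.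
Qed.

(* An exponent sequence [s] with entries in [N] stands for the factorization
   [powers r s] of the element [psum r s] of S_{r,N}. *)
Definition psum (r : rat) (s : seq nat) : rat := \sum_(k <- s) r ^+ k.
Definition powers (r : rat) (s : seq nat) : seq rat := [seq r ^+ k | k <- s].
Definition exps_in (N : nat -> Prop) (s : seq nat) : Prop := forall k, k \in s -> N k.

Lemma psum_cat r s1 s2 : psum r (s1 ++ s2) = psum r s1 + psum r s2.
Proof. by rewrite /psum big_cat. Qed.

Lemma psum_nseq r c K : psum r (nseq c K) = c%:R * r ^+ K.
Proof.
rewrite /psum big_nseq; elim: c => [|c IH] /=; first by rewrite mul0r.
by rewrite IH -natr1 mulrDl mul1r addrC.
Qed.

Lemma psum_perm r s s' : perm_eq s s' -> psum r s = psum r s'.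
Proof. by move=> p; rewrite /psum (perm_big _ p). Qed.

Lemma psum_ge0 r s : 0 <= r -> 0 <= psum r s.
Proof. by move=> r0; apply: sumr_ge0 => k _; apply: exprn_ge0. Qed.

Lemma psum_gt0 r s : 0 < r -> s != [::] -> 0 < psum r s.
Proof.
move=> r0; case: s => [//|k s] _; rewrite /psum big_cons.
by rewrite ltr_pwDl ?exprn_gt0 ?psum_ge0 // ltW.
Qed.

Lemma psum_term_le r s j : 0 <= r -> j \in s -> r ^+ j <= psum r s.
Proof.
by move=> r0 js; rewrite (psum_perm r (perm_to_rem js)) /psum big_cons lerDl psum_ge0.
Qed.

Lemma psum_le_size r s b : (forall k, k \in s -> r ^+ k <= b) -> psum r s <= (size s)%:R * b.
Proof.
elim: s => [|k s IH] bounded; first by rewrite /psum big_nil mul0r.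
rewrite /psum big_cons -/(psum r s) /= -natr1 mulrDl mul1r addrC.
by apply: lerD; [apply: IH => j js | ]; apply: bounded; rewrite inE ?js ?orbT ?eqxx.
Qed.

Lemma leq_pow_max a M m dl : (a <= M)%N -> (0 < M)%N -> (m <= dl)%N -> (a ^ m <= M ^ dl)%N.
Proof.
move=> aM M_gt0 m_le; apply: leq_trans (leq_pexp2l M_gt0 m_le).
by case: m {m_le} => [|m] //; rewrite leq_exp2r.
Qed.

Lemma coprime_ndvd_exp a b e : (1 < a)%N -> coprime a b -> ~~ (a %| b ^ e)%N.
Proof.
move=> a_gt1 co; apply/negP => /gcdn_idPl a_gcd.
by move: (coprimeXr e co); rewrite /coprime a_gcd => /eqP a1; rewrite a1 in a_gt1.
Qed.

Lemma eq_coeff_mod (a q c c' A A' : nat) : (a * c + A = a * c' + A')%N ->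
  (q %| A)%N -> (q %| A')%N -> coprime q a -> (c < q)%N -> (c' < q)%N -> c = c'.
Proof.
wlog le : c c' A A' / (c' <= c)%N.
  move=> W E qA qA' co cq cq'; case: (leqP c' c) => h; first exact: (W c c' A A').
  by symmetry; apply: (W c' c A' A) => //; apply: ltnW.
move=> E qA qA' co cq cq'.
have E2 : ((c - c') * a + A = A')%N.
  by apply/eqP; rewrite -(eqn_add2l (c' * a)) addnA -mulnDl subnKC // mulnC E mulnC.
have : (q %| (c - c') * a)%N by rewrite -(dvdn_addl _ qA) E2.
rewrite Gauss_dvdl // => dv; case: (posnP (c - c')) => h; first lia.
by have := dvdn_leq h dv; lia.
Qed.

(* Clearing denominators in a sum of powers of [n / d] with exponents in
   [K, L] produces the integer [scaled_sum n d K L s]. *)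
Definition scaled_sum (n d K L : nat) (s : seq nat) : nat :=
  (\sum_(k <- s) n ^ (k - K) * d ^ (L - k))%N.

Section RatioPowers.
Variables (n d : nat) (r : rat).
Hypotheses (r_def : r = n%:R / d%:R) (n_gt0 : (0 < n)%N) (d_gt0 : (0 < d)%N).

Lemma psum_scaled K L s : (forall k, k \in s -> K <= k <= L)%N ->
  psum r s * ((d%:R : rat) ^+ L / (n%:R) ^+ K) = (scaled_sum n d K L s)%:R.
Proof.
move=> range; rewrite /psum /scaled_sum big_distrl natr_sum /=.
apply: eq_big_seq => k /range /andP [Kk kL].
have nz : (n%:R : rat) != 0 by rewrite pnatr_eq0 -lt0n.
have dz : (d%:R : rat) != 0 by rewrite pnatr_eq0 -lt0n.
have en : (n%:R : rat) ^+ k = n%:R ^+ K * n%:R ^+ (k - K) by rewrite -exprD subnKC.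
have ed : (d%:R : rat) ^+ L = d%:R ^+ k * d%:R ^+ (L - k) by rewrite -exprD subnKC.
rewrite r_def natrM !natrX expr_div_n en ed.
by field; rewrite !expf_neq0.
Qed.

Lemma scaled_sum_eq K L s s' : (forall k, k \in s ++ s' -> K <= k <= L)%N ->
  psum r s = psum r s' -> scaled_sum n d K L s = scaled_sum n d K L s'.
Proof.
move=> range E; apply/eqP; rewrite -(eqr_nat rat) -!psum_scaled ?E // => k ks;
  by apply: range; rewrite mem_cat ks ?orbT.
Qed.

Lemma exchange_powers m k : (n ^ m)%:R * r ^+ k = (d ^ m)%:R * r ^+ (k + m).
Proof.
have dz : (d%:R : rat) != 0 by rewrite pnatr_eq0 -lt0n.
by rewrite exprD r_def !expr_div_n !natrX; field; rewrite !expf_neq0.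
Qed.

End RatioPowers.

(* A multiset of exponents in a class [C] (closed under deleting all copies
   of an exponent) is determined by its sum, as soon as any two candidates
   with the same sum agree on the multiplicity of one of their exponents:
   peel that exponent off both and recurse. *)
Lemma perm_eq_by_peeling (C : seq nat -> Prop) (r : rat) :
  (forall s K, C s -> C [seq k <- s | k != K]) ->
  (forall s s', C s -> C s' -> psum r s = psum r s' -> s ++ s' != [::] ->
     exists2 K, K \in s ++ s' & count_mem K s = count_mem K s') ->
  forall s s', C s -> C s' -> psum r s = psum r s' -> perm_eq s s'.
Proof.
move=> C_filter peel s s'.
move: {2}(size s + size s')%N (leqnn (size s + size s')) => m.
elim: m s s' => [|m IH] s s' hm Cs Cs' E.
  by case: s s' hm {Cs Cs' E} => [|? ?] [|? ?].
have [|ne] := eqVneq (s ++ s') [::]; first by case: s s' {hm Cs Cs' E} => [|? ?] [|? ?].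
have [K KS cK] := peel s s' Cs Cs' E ne.
have pos t : K \in t -> (0 < count_mem K t)%N.
  by move=> Kt; rewrite lt0n; apply: contraTN Kt => /eqP /count_memPn.
have c_gt0 : (0 < count_mem K s)%N.
  by move: KS; rewrite mem_cat => /orP [/pos // | /pos]; rewrite cK.
have ps := perm_count_split s K; have ps' := perm_count_split s' K.
have rest : perm_eq [seq k <- s | k != K] [seq k <- s' | k != K].
  apply: IH; try exact: C_filter.
  - move: hm c_gt0; rewrite (perm_size ps) (perm_size ps') !size_cat !size_nseq cK.
    move: (count_mem K s') => c h1 h2.
    set x := size (filter _ s) in h1 *; set y := size (filter _ s') in h1 *.
    lia.
  - rewrite /psum !big_filter.
    by move: E; rewrite /psum !(big_count_split _ _ K) cK => /addrI.
apply: (perm_trans ps); rewrite perm_sym; apply: (perm_trans ps').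
by rewrite cK perm_cat2l perm_sym.
Qed.

Lemma exps_in_filter N (p : pred nat) s : exps_in N s -> exps_in N (filter p s).
Proof. by move=> Ns k; rewrite mem_filter => /andP [_ /Ns]. Qed.

Lemma count_mem_filter (p : pred nat) s k :
  (count_mem k (filter p s) <= count_mem k s)%N.
Proof. by rewrite count_filter; apply: sub_count => x /andP []. Qed.

(* When r = n/d < 1 the relation d^m r^k = n^m r^(k-m)
   shortens factorizations by moving exponents down; a factorization is
   [down_reduced] when no such move applies to it.  Symmetrically for r > 1
   and moves n^m r^k = d^m r^(k+m). *)
Definition down_reduced (N : nat -> Prop) (d dl : nat) (s : seq nat) : Prop :=
  forall k m, (0 < m <= dl)%N -> (m <= k)%N -> N (k - m)%N -> (count_mem k s < d ^ m)%N.

Definition up_reduced (N : nat -> Prop) (n dl : nat) (s : seq nat) : Prop :=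
  forall k m, (0 < m <= dl)%N -> N (k + m)%N -> (count_mem k s < n ^ m)%N.

Lemma down_reduced_filter N d dl (p : pred nat) s :
  down_reduced N d dl s -> down_reduced N d dl (filter p s).
Proof.
by move=> R k m ml mk Nkm; apply: leq_ltn_trans (R k m ml mk Nkm); apply: count_mem_filter.
Qed.

Lemma up_reduced_filter N n dl (p : pred nat) s :
  up_reduced N n dl s -> up_reduced N n dl (filter p s).
Proof.
by move=> R k m ml Nkm; apply: leq_ltn_trans (R k m ml Nkm); apply: count_mem_filter.
Qed.

Section Factorizations.
Variables (r : rat) (N : nat -> Prop).

Lemma psum_in_S s : exps_in N s -> S_rN r N (psum r s).
Proof. by exists s. Qed.

Lemma power_in_S k : N k -> S_rN r N (r ^+ k).
Proof. by move=> Nk; exists [:: k]; rewrite big_seq1; split => // j /[!inE] /eqP ->. Qed.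

Lemma powers_factorization s : (forall k, N k -> is_atom (S_rN r N) (r ^+ k)) ->
  exps_in N s -> is_factorization (S_rN r N) (psum r s) (powers r s).
Proof.
move=> atoms Ns; split; last by rewrite /powers big_map.
by move=> a /mapP [k ks ->]; apply/atoms/Ns.
Qed.

Hypothesis r_gt0 : 0 < r.

(* An atom is a single generator r^k: a longer sum splits off its first term. *)
Lemma atom_is_power a : is_atom (S_rN r N) a -> exists2 k, N k & a = r ^+ k.
Proof.
move=> [[[|k s] [Ns ->]] a_neq0 irr]; first by rewrite big_nil eqxx in a_neq0.
have Nk : N k by apply: Ns; rewrite mem_head.
exists k => //; rewrite big_cons.
have Ss : S_rN r N (psum r s) by apply: psum_in_S => j js; apply: Ns; rewrite inE js orbT.
case: (irr _ _ (power_in_S Nk) Ss); first by rewrite big_cons.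
  by move/eqP; rewrite expf_eq0 (gt_eqF r_gt0) andbF.
by rewrite /psum => ->; rewrite addr0.
Qed.

Lemma factorization_exps x z : is_factorization (S_rN r N) x z ->
  exists s, [/\ exps_in N s, z = powers r s & psum r s = x].
Proof.
move=> [atoms <-] {x}; elim: z atoms => [|a z IH] atoms.
  by exists [::]; split => //; rewrite /psum !big_nil.
have [k Nk ->] := atom_is_power (atoms a (mem_head _ _)).
have [s [Ns -> Es]] : exists s, [/\ exps_in N s, z = powers r s & psum r s = \sum_(b <- z) b].
  by apply: IH => b bz; apply: atoms; rewrite inE bz orbT.
exists (k :: s); split => //; last by rewrite /psum !big_cons -Es.
by move=> j /[!inE] /orP [/eqP ->|/Ns].
Qed.

End Factorizations.

Lemma exchange_step r N s k A k' B : exps_in N s -> N k' ->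
  (A <= count_mem k s)%N -> A%:R * r ^+ k = B%:R * r ^+ k' ->
  exists t, [/\ exps_in N t, psum r t = psum r s, (size t + A = size s + B)%N
              & (fdist (powers r s) (powers r t) <= maxn A B)%N].
Proof.
move=> Ns Nk' A_le E; set w := nseq (count_mem k s - A) k ++ [seq j <- s | j != k].
have ps : perm_eq s (nseq A k ++ w) by rewrite catA -nseqD subnKC //; apply: perm_count_split.
exists (nseq B k' ++ w); split.
- move=> j; rewrite mem_cat => /orP [/nseqP [-> _] // | jw]; apply: Ns.
  by rewrite (perm_mem ps) mem_cat jw orbT.
- by rewrite (psum_perm r ps) !psum_cat !psum_nseq E.
- by rewrite (perm_size ps) !size_cat !size_nseq; lia.
- rewrite (fdist_perm_l _ (perm_map _ ps)) /powers !map_cat !map_nseq.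
  by apply: leq_trans (fdist_exchange _ _ _) _; rewrite !size_nseq.
Qed.

Section NormalForms.
Variables (r : rat) (N : nat -> Prop) (bd : nat) (P : seq nat -> Prop).
Hypotheses (r_gt0 : 0 < r) (atoms : forall k, N k -> is_atom (S_rN r N) (r ^+ k)).
Hypothesis shorten : forall s, exps_in N s -> ~ P s ->
  exists t, [/\ exps_in N t, psum r t = psum r s, (size t < size s)%N
              & (fdist (powers r s) (powers r t) <= bd)%N].
Hypothesis normal_unique : forall s s', exps_in N s -> exps_in N s' -> P s -> P s' ->
  psum r s = psum r s' -> perm_eq s s'.

Lemma chain_to_normal_form s : exps_in N s -> exists t,
  [/\ exps_in N t, P t, psum r t = psum r s
      & n_chain (S_rN r N) (psum r s) bd (powers r s) (powers r t)].
Proof.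
move: {2}(size s) (erefl (size s)) => m; elim/ltn_ind: m s => m IH s Em Ns.
case: (classic (P s)) => Ps; first by exists s; split => //; apply: chain_refl.
have [t [Nt Et lt step]] := shorten Ns Ps.
rewrite Em in lt; have [u [Nu Pu Eu chain]] := IH (size t) lt t erefl Nt.
exists u; split; rewrite ?Eu //; apply: (chain_trans (y := powers r t)).
  by apply: chain_step; rewrite // -Et; apply: powers_factorization.
by rewrite -Et.
Qed.

Theorem catenary_le_of_normal_forms : catenary_le (S_rN r N) bd.
Proof.
move=> x z z' _ fz fz'.
have [s [Ns -> Ex]] := factorization_exps r_gt0 fz; subst x.
have [s' [Ns' -> Es]] := factorization_exps r_gt0 fz'.
have [t [Nt Pt Et chain]] := chain_to_normal_form Ns.
have [t' [Nt' Pt' Et' chain']] := chain_to_normal_form Ns'.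
apply: (chain_trans chain); apply: (chain_trans (y := powers r t')).
  apply: chain_step; last first.
    by rewrite fdist_perm //; apply/perm_map/normal_unique => //; rewrite Et Et' Es.
  by rewrite -Es -Et'; apply: powers_factorization.
by apply: chain_sym; rewrite -?Es //; apply: powers_factorization.
Qed.

End NormalForms.

(* Since dl > 0 lies in the submonoid N, consecutive elements of N are at
   most dl apart. *)
Section MonoidGaps.
Variables (N : nat -> Prop) (dl : nat).
Hypotheses (N0 : N 0%N) (Nadd : forall a b, N a -> N b -> N (a + b)%N)
  (Ndl : N dl) (dl_gt0 : (0 < dl)%N).

Lemma prev_in_monoid K : (0 < K)%N ->
  exists j, [/\ (j < K)%N, N j, (K <= j + dl)%N & forall i, (j < i < K)%N -> ~ N i].
Proof.
move=> K_gt0; have N_start : N (K.-1 - K.-1)%N by rewrite subnn.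
have [m [Nj least]] := least_witness (P := fun m => N (K.-1 - m)%N) N_start.
exists (K.-1 - m)%N; split => //.
- lia.
- rewrite leqNgt; apply/negP => far; apply: (least (K.-1 - (K.-1 - m + dl))%N); first lia.
  by rewrite (_ : K.-1 - _ = K.-1 - m + dl)%N; [apply: Nadd | lia].
- move=> i ij Ni; apply: (least (K.-1 - i)%N); first lia.
  by rewrite (_ : K.-1 - _ = i)%N //; lia.
Qed.

Lemma next_in_monoid K : N K ->
  exists j, [/\ (K < j)%N, N j, (j <= K + dl)%N & forall i, (K < i < j)%N -> ~ N i].
Proof.
move=> NK; have far : (K < K + dl)%N /\ N (K + dl)%N by split; [lia | apply: Nadd].
have [j [[Kj Nj] least]] := least_witness (P := fun j => (K < j)%N /\ N j) far.
exists j; split => //; first by rewrite leqNgt; apply/negP => lt; apply: (least _ lt far).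
by move=> i /andP [Ki ij] Ni; apply: (least i ij).
Qed.

End MonoidGaps.

Section PuiseuxSemiring.
Variables (n d : nat) (r : rat) (N : nat -> Prop) (dl : nat).
Hypotheses (r_def : r = n%:R / d%:R) (n_gt1 : (1 < n)%N) (d_gt1 : (1 < d)%N)
  (coprime_nd : coprime n d).
Hypotheses (N0 : N 0%N) (Nadd : forall a b, N a -> N b -> N (a + b)%N)
  (Ndl : N dl) (dl_gt0 : (0 < dl)%N).

Let n_gt0 : (0 < n)%N. Proof. exact: ltnW. Qed.
Let d_gt0 : (0 < d)%N. Proof. exact: ltnW. Qed.

(* For down-reduced factorizations with the same sum, the largest exponent K
   occurs equally often: clearing denominators, every other term is divisible
   by d^(K-j) (j the element of N preceding K), which is coprime to the
   coefficient n^K of the top term and exceeds both multiplicities. *)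
Lemma down_top_count s s' : exps_in N s -> exps_in N s' ->
  down_reduced N d dl s -> down_reduced N d dl s' -> psum r s = psum r s' ->
  s ++ s' != [::] -> exists2 K, K \in s ++ s' & count_mem K s = count_mem K s'.
Proof.
move=> Ns Ns' Rs Rs' E ne; have [K KS top] := seq_max_in ne; exists K => //.
have := scaled_sum_eq r_def n_gt0 d_gt0 (K := 0) (L := K) top E.
rewrite /scaled_sum !(big_count_split _ _ K) subn0 subnn expn0 muln1 !natmul_muln.
have others (t : seq nat) k : {subset t <= s ++ s'} -> k \in t -> k != K -> (k < K)%N.
  by move=> sub kt kK; rewrite ltn_neqAle kK top ?sub.
case: (posnP K) => [K0 | K_gt0].
  have none (t : seq nat) : {subset t <= s ++ s'} ->
      (\sum_(k <- t | k != K) n ^ (k - 0) * d ^ (K - k) = 0)%N.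
    by move=> sub; rewrite big1_seq // => k /andP [kK kt]; have := others t k sub kt kK; lia.
  rewrite !none ?K0 ?expn0 ?mul1n; first lia.
  - by move=> k ks; rewrite mem_cat ks orbT.
  - by move=> k ks; rewrite mem_cat ks.
have [j [jK Nj Kj gap]] := prev_in_monoid N0 Nadd Ndl dl_gt0 K_gt0.
have rest_dvd (t : seq nat) : exps_in N t -> {subset t <= s ++ s'} ->
    (d ^ (K - j) %| \sum_(k <- t | k != K) n ^ (k - 0) * d ^ (K - k))%N.
  move=> Nt sub; rewrite big_seq_cond; apply: dvdn_sum => k /andP [kt kK].
  apply: dvdn_mull; apply: dvdn_exp2l; rewrite leq_sub2l // leqNgt; apply/negP => jk.
  by apply: (gap k); [rewrite jk (others t k sub kt kK) | apply: Nt].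
have small t : down_reduced N d dl t -> (count_mem K t < d ^ (K - j))%N.
  by move=> Rt; apply: Rt; [lia | lia | rewrite subKn // ltnW].
move/(eq_coeff_mod (q := d ^ (K - j))); apply; rewrite ?small //.
- by apply: rest_dvd => // k ks; rewrite mem_cat ks.
- by apply: rest_dvd => // k ks; rewrite mem_cat ks orbT.
- by rewrite coprimeXl // coprimeXr // coprime_sym.
Qed.

(* Dually, for up-reduced factorizations the smallest exponent K occurs
   equally often: every other term is divisible by n^(j-K), j the element of
   N following K. *)
Lemma up_bottom_count s s' : exps_in N s -> exps_in N s' ->
  up_reduced N n dl s -> up_reduced N n dl s' -> psum r s = psum r s' ->
  s ++ s' != [::] -> exists2 K, K \in s ++ s' & count_mem K s = count_mem K s'.
Proof.
move=> Ns Ns' Rs Rs' E ne; have [K KS bot] := seq_min_in ne; exists K => //.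
have [L LS top] := seq_max_in ne.
have NK : N K by move: KS; rewrite mem_cat => /orP [/Ns|/Ns'].
have := scaled_sum_eq r_def n_gt0 d_gt0 (K := K) (L := L)
  (fun k ks => introT andP (conj (bot k ks) (top k ks))) E.
rewrite /scaled_sum !(big_count_split _ _ K) subnn expn0 mul1n !natmul_muln.
have [j [Kj Nj jK gap]] := next_in_monoid Nadd Ndl dl_gt0 NK.
have rest_dvd (t : seq nat) : exps_in N t -> {subset t <= s ++ s'} ->
    (n ^ (j - K) %| \sum_(k <- t | k != K) n ^ (k - K) * d ^ (L - k))%N.
  move=> Nt sub; rewrite big_seq_cond; apply: dvdn_sum => k /andP [kt kK].
  apply: dvdn_mulr; apply: dvdn_exp2l; rewrite leq_sub2r // leqNgt; apply/negP => kj.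
  have Kk : (K < k)%N by rewrite ltn_neqAle eq_sym kK bot ?sub.
  by apply: (gap k); [rewrite Kk | apply: Nt].
have small t : up_reduced N n dl t -> (count_mem K t < n ^ (j - K))%N.
  by move=> Rt; apply: Rt; [lia | rewrite subnKC // ltnW].
move/(eq_coeff_mod (q := n ^ (j - K))); apply; rewrite ?small //.
- by apply: rest_dvd => // k ks; rewrite mem_cat ks.
- by apply: rest_dvd => // k ks; rewrite mem_cat ks orbT.
- by rewrite coprimeXl // coprimeXr.
Qed.

Lemma down_reduced_unique s s' : exps_in N s -> exps_in N s' ->
  down_reduced N d dl s -> down_reduced N d dl s' -> psum r s = psum r s' -> perm_eq s s'.
Proof.
move=> Ns Ns' Rs Rs'.
apply: (perm_eq_by_peeling (C := fun t => exps_in N t /\ down_reduced N d dl t)).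
- by move=> t K [Nt Rt]; split; [apply: exps_in_filter | apply: down_reduced_filter].
- by move=> t t' [Nt Rt] [Nt' Rt']; apply: down_top_count.
- by [].
- by [].
Qed.

Lemma up_reduced_unique s s' : exps_in N s -> exps_in N s' ->
  up_reduced N n dl s -> up_reduced N n dl s' -> psum r s = psum r s' -> perm_eq s s'.
Proof.
move=> Ns Ns' Rs Rs'.
apply: (perm_eq_by_peeling (C := fun t => exps_in N t /\ up_reduced N n dl t)).
- by move=> t K [Nt Rt]; split; [apply: exps_in_filter | apply: up_reduced_filter].
- by move=> t t' [Nt Rt] [Nt' Rt']; apply: up_bottom_count.
- by [].
- by [].
Qed.


Let r_gt0 : 0 < r. Proof. by rewrite r_def divr_gt0 // ltr0n. Qed.

Let n_neq_d : n != d.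
Proof. by apply/eqP => nd; move: coprime_nd d_gt1; rewrite nd /coprime gcdnn => /eqP ->. Qed.

Lemma power_neq1 k : (0 < k)%N -> r ^+ k != 1.
Proof.
move=> k_gt0; apply/eqP; rewrite r_def expr_div_n => /divr1_eq /eqP.
by rewrite -!natrX eqr_nat eqn_exp2r // (negPf n_neq_d).
Qed.

(* A power r^k is never the sum of powers of r that are all smaller than
   r^k: clearing denominators would make n divide a power of d (when r < 1,
   all exponents exceed k) or d divide a power of n (when r > 1, all
   exponents are below k). *)
Lemma power_ne_sum_smaller k s : (forall j, j \in s -> r ^+ j < r ^+ k) ->
  psum r [:: k] != psum r s.
Proof.
move=> smaller; apply/eqP => E.
have [s0|ne] := eqVneq s [::].
  by move: E; rewrite s0 /psum big_seq1 big_nil => /eqP; rewrite expf_eq0 (gt_eqF r_gt0) andbF.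
have [L LS top] := seq_max_in ne.
have [nd|dn] : (n < d)%N \/ (d < n)%N by move: n_neq_d; rewrite neq_ltn => /orP.
- have above j : j \in s -> (k < j)%N.
    by move/smaller; rewrite ltr_iXn2l // r_def ltr_pdivrMr ?ltr0n // mul1r ltr_nat.
  have range j : j \in [:: k] ++ s -> (k <= j <= L)%N.
    rewrite mem_cat => /orP [/[!inE] /eqP -> | js]; first by rewrite leqnn ltnW // above.
    by rewrite top // ltnW // above.
  have := scaled_sum_eq r_def n_gt0 d_gt0 range E.
  rewrite /scaled_sum big_seq1 subnn expn0 mul1n big_seq => scaled.
  have : (n %| d ^ (L - k))%N.
    rewrite scaled; apply: dvdn_sum => i /above k_lt_i.
    by apply: dvdn_mulr; apply: dvdn_exp; rewrite ?subn_gt0.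
  exact/negP/coprime_ndvd_exp.
- have below j : j \in s -> (j < k)%N.
    by move/smaller; rewrite ltr_eXn2l // r_def ltr_pdivlMr ?ltr0n // mul1r ltr_nat.
  have range j : j \in [:: k] ++ s -> (0 <= j <= k)%N.
    by rewrite mem_cat => /orP [/[!inE] /eqP -> | /below/ltnW ->]; rewrite ?leqnn.
  have := scaled_sum_eq r_def n_gt0 d_gt0 range E.
  rewrite /scaled_sum big_seq1 subn0 subnn expn0 muln1 big_seq => scaled.
  have : (d %| n ^ k)%N.
    rewrite scaled; apply: dvdn_sum => i /below i_lt_k.
    by apply: dvdn_mull; apply: dvdn_exp; rewrite ?subn_gt0.
  by apply/negP/coprime_ndvd_exp; rewrite // coprime_sym.
Qed.

(* Hence every generator r^k (k in N) is an atom: in a splitting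
   r^k = b + c with b, c nonzero, every summand is smaller than r^k. *)
Lemma power_is_atom k : N k -> is_atom (S_rN r N) (r ^+ k).
Proof.
move=> Nk; split; [exact: power_in_S | by rewrite expf_neq0 // gt_eqF |].
move=> _ _ [s1 [_ ->]] [s2 [_ ->]]; rewrite -/(psum r s1) -/(psum r s2) => E.
have [->|ne1] := eqVneq s1 [::]; first by left; rewrite /psum big_nil.
have [->|ne2] := eqVneq s2 [::]; first by right; rewrite /psum big_nil.
have smaller j : j \in s1 ++ s2 -> r ^+ j < r ^+ k.
  rewrite E mem_cat => /orP [] js; apply: le_lt_trans (psum_term_le (ltW r_gt0) js) _.
    by rewrite ltrDl psum_gt0.
  by rewrite ltrDr psum_gt0.
by move: (power_ne_sum_smaller smaller); rewrite psum_cat -E /psum big_seq1 eqxx.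
Qed.

(* When r < 1, a factorization that is not down-reduced contains d^m copies
   of some r^k with N (k - m); trading them for n^m copies of r^(k-m)
   shortens it by a move of length at most max(n, d)^dl. *)
Lemma down_shorten : (n < d)%N -> forall s, exps_in N s -> ~ down_reduced N d dl s ->
  exists t, [/\ exps_in N t, psum r t = psum r s, (size t < size s)%N
              & (fdist (powers r s) (powers r t) <= maxn n d ^ dl)%N].
Proof.
move=> nd s Ns not_reduced.
have [k [m [m_range mk Nkm many]]] : exists k m, [/\ (0 < m <= dl)%N, (m <= k)%N,
    N (k - m)%N & (d ^ m <= count_mem k s)%N].
  apply: NNPP => none; apply: not_reduced => k m m_range mk Nkm.
  by rewrite ltnNge; apply/negP => many; apply: none; exists k, m.
have E : (d ^ m)%:R * r ^+ k = (n ^ m)%:R * r ^+ (k - m).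
  by rewrite (exchange_powers r_def d_gt0) subnK.
have [t [Nt Et size_t dist]] := exchange_step Ns Nkm many E.
have fewer : (n ^ m < d ^ m)%N by case/andP: m_range => m_gt0 _; rewrite ltn_exp2r.
exists t; split => //; first by rewrite -(ltn_add2r (d ^ m)) size_t ltn_add2l.
apply: leq_trans dist _; rewrite geq_max !leq_pow_max ?leq_maxl ?leq_maxr //;
  by [rewrite leq_max n_gt0 | case/andP: m_range].
Qed.

(* Symmetrically, when r > 1 non-up-reduced factorizations trade n^m copies
   of r^k for d^m copies of r^(k+m). *)
Lemma up_shorten : (d < n)%N -> forall s, exps_in N s -> ~ up_reduced N n dl s ->
  exists t, [/\ exps_in N t, psum r t = psum r s, (size t < size s)%N
              & (fdist (powers r s) (powers r t) <= maxn n d ^ dl)%N].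
Proof.
move=> dn s Ns not_reduced.
have [k [m [m_range Nkm many]]] : exists k m, [/\ (0 < m <= dl)%N,
    N (k + m)%N & (n ^ m <= count_mem k s)%N].
  apply: NNPP => none; apply: not_reduced => k m m_range Nkm.
  by rewrite ltnNge; apply/negP => many; apply: none; exists k, m.
have [t [Nt Et size_t dist]] :=
  exchange_step Ns Nkm many (exchange_powers r_def d_gt0 m k).
have fewer : (d ^ m < n ^ m)%N by case/andP: m_range => m_gt0 _; rewrite ltn_exp2r.
exists t; split => //; first by rewrite -(ltn_add2r (n ^ m)) size_t ltn_add2l.
apply: leq_trans dist _; rewrite geq_max !leq_pow_max ?leq_maxl ?leq_maxr //;
  by [rewrite leq_max n_gt0 | case/andP: m_range].
Qed.

(* Upper bound: connect any two factorizations through the (unique) reduced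
   factorization, down-reduced if r < 1 and up-reduced if r > 1. *)
Theorem catenary_upper : catenary_le (S_rN r N) (maxn n d ^ dl).
Proof.
have [nd|dn] : (n < d)%N \/ (d < n)%N by move: n_neq_d; rewrite neq_ltn => /orP.
- exact (catenary_le_of_normal_forms (P := down_reduced N d dl) r_gt0 power_is_atom
    (down_shorten nd) down_reduced_unique).
- exact (catenary_le_of_normal_forms (P := up_reduced N n dl) r_gt0 power_is_atom
    (up_shorten dn) up_reduced_unique).
Qed.

Hypothesis dl_min : forall k, N k -> (0 < k)%N -> (dl <= k)%N.

(* The atom 1 only appears in the factorization n^dl * 1 of n^dl: otherwise
   the remaining exponents, all at least dl, would make n^dl divide a
   positive number smaller than n^dl. *)
Lemma ones_factorization s : exps_in N s -> psum r s = (n ^ dl)%:R -> 0%N \in s ->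
  perm_eq s (nseq (n ^ dl) 0%N).
Proof.
move=> Ns E s0; set c := count_mem 0%N s; set rest := [seq k <- s | k != 0%N].
have ps : perm_eq s (nseq c 0%N ++ rest) := perm_count_split s 0%N.
have E' : c%:R + psum r rest = (n ^ dl)%:R.
  by rewrite -E (psum_perm r ps) psum_cat psum_nseq expr0 mulr1.
have [rest0|ne] := eqVneq rest [::].
  move: E'; rewrite rest0 /psum big_nil addr0 => /eqP; rewrite eqr_nat => /eqP c_eq.
  by move: ps; rewrite rest0 cats0 c_eq.
exfalso; have [L _ top] := seq_max_in ne.
have high k : k \in rest -> (dl <= k <= L)%N.
  move=> kr; rewrite top // andbT; move: kr; rewrite mem_filter => /andP [k0 /Ns /dl_min].
  by apply; rewrite lt0n.
have c_gt0 : (0 < c)%N by rewrite lt0n; apply: contraTN s0 => /eqP /count_memPn.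
have rest_pos := psum_gt0 r_gt0 ne.
have c_lt : (c < n ^ dl)%N by rewrite -(ltr_nat rat) -E' ltrDl.
have : psum r rest = (n ^ dl - c)%:R by rewrite natrB ?(ltnW c_lt) // -E' addrC addKr.
move/(congr1 (fun x => x * ((d%:R : rat) ^+ L / n%:R ^+ 0))).
rewrite (psum_scaled r_def n_gt0 d_gt0) ?divr1; last by move=> k /high /andP [_ ->].
rewrite -natrX -natrM => /eqP; rewrite eqr_nat => /eqP scaled.
have : (n ^ dl %| (n ^ dl - c) * d ^ L)%N.
  rewrite -scaled /scaled_sum big_seq; apply: dvdn_sum => k /high /andP [dlk _].
  by apply: dvdn_mulr; rewrite subn0 dvdn_exp2l.
rewrite Gauss_dvdl; last by rewrite coprimeXl // coprimeXr.
by move/dvdn_leq; rewrite subn_gt0 => /(_ c_lt); lia.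
Qed.

Lemma high_factorization_size s : (n < d)%N -> (forall k, k \in s -> (dl <= k)%N) ->
  psum r s = (n ^ dl)%:R -> (d ^ dl <= size s)%N.
Proof.
move=> nd high E.
have r_le1 : r <= 1 by rewrite r_def ler_pdivrMr ?ltr0n // mul1r ler_nat ltnW.
have : psum r s <= (size s)%:R * r ^+ dl.
  by apply: psum_le_size => k /high; apply: ler_wiXn2l; rewrite // ltW.
rewrite E r_def expr_div_n mulrA ler_pdivlMr ?exprn_gt0 ?ltr0n //.
by rewrite -!natrX -!natrM ler_nat mulnC leq_pmul2r // expn_gt0 n_gt0.
Qed.

(* A step from a factorization of n^dl using the atom 1 (hence n^dl * 1) to
   one not using it has length at least max(n, d)^dl: the two share no atom,
   and when r < 1 the second one has at least d^dl atoms. *)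
Lemma leave_one_distance x u v : x = (n ^ dl)%:R ->
  is_factorization (S_rN r N) x u -> is_factorization (S_rN r N) x v ->
  (1 : rat) \in u -> (1 : rat) \notin v -> (maxn n d ^ dl <= fdist u v)%N.
Proof.
move=> x_def f_u f_v u1 v1.
have [su [Nsu u_def Esu]] := factorization_exps r_gt0 f_u.
have [sv [Nsv v_def Esv]] := factorization_exps r_gt0 f_v.
have su0 : 0%N \in su.
  move: u1; rewrite u_def => /mapP [k ks /esym]; case: (posnP k) => [<- //|k_gt0].
  by move/eqP; rewrite (negPf (power_neq1 k_gt0)).
have u_ones : perm_eq u (nseq (n ^ dl) 1).
  by rewrite u_def -(expr0 r) -map_nseq perm_map // ones_factorization // Esu.
rewrite (fdist_perm_l _ u_ones) fdist_disjoint ?size_nseq; last by move=> y /nseqP [-> _].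
rewrite v_def size_map.
have [nd|dn] : (n < d)%N \/ (d < n)%N by move: n_neq_d; rewrite neq_ltn => /orP.
- rewrite (maxn_idPr (ltnW nd)) leq_max; apply/orP; right.
  apply: high_factorization_size => // [k ks|]; last by rewrite Esv.
  apply: dl_min; first exact: Nsv.
  rewrite lt0n; apply: contra v1 => /eqP k0; rewrite v_def; apply/mapP; exists k => //.
  by rewrite k0 expr0.
- by rewrite (maxn_idPl (ltnW dn)) leq_maxl.
Qed.

(* Lower bound: a chain from n^dl * 1 to d^dl * r^dl, two factorizations of
   n^dl, must at some step leave the factorizations using the atom 1. *)
Theorem catenary_lower b : catenary_le (S_rN r N) b -> (maxn n d ^ dl <= b)%N.
Proof.
move=> cat; set ones := nseq (n ^ dl) 0%N; set tops := nseq (d ^ dl) dl.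
have N_ones : exps_in N ones by move=> k /nseqP [-> _].
have N_tops : exps_in N tops by move=> k /nseqP [-> _].
have f_ones := powers_factorization power_is_atom N_ones.
have f_tops : is_factorization (S_rN r N) (psum r ones) (powers r tops).
  have -> : psum r ones = psum r tops.
    by rewrite !psum_nseq (exchange_powers r_def d_gt0) add0n.
  exact (powers_factorization power_is_atom N_tops).
have [zs [f_zs [path_zs last_zs]]] := cat _ _ _ (psum_in_S r N_ones) f_ones f_tops.
have one_in : (1 : rat) \in powers r ones.
  by rewrite /powers map_nseq expr0 mem_nseq expn_gt0 n_gt0.
have one_out : (1 : rat) \notin last (powers r ones) zs.
  by rewrite last_zs /powers map_nseq mem_nseq eq_sym (negPf (power_neq1 dl_gt0)) andbF.
have [u [v [u1 v1 u_in v_in step]]] :=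
  path_exit (P := fun w : seq rat => (1 : rat) \in w) path_zs one_in one_out.
have f_u : is_factorization (S_rN r N) (psum r ones) u.
  by move: u_in; rewrite inE => /orP [/eqP ->|/f_zs].
have x_def : psum r ones = (n ^ dl)%:R by rewrite psum_nseq expr0 mulr1.
exact: leq_trans (leave_one_distance x_def f_u (f_zs v v_in) u1 v1) step.
Qed.

End PuiseuxSemiring.

(* When r = m is an integer, every atom equals 1 (r^k = 1 + (m^k - 1) * 1),
   so every element has exactly one factorization. *)
Lemma catenary_integer_base (r : rat) N (m : nat) : r = m%:R -> 0 < r -> N 0%N ->
  catenary_degree_eq (S_rN r N) 0.
Proof.
move=> r_def r_gt0 N0; split => // x z z' _ fz fz'.
have m_gt0 : (0 < m)%N by rewrite -(ltr0n rat) -r_def.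
have atom_one a : is_atom (S_rN r N) a -> a = 1.
  move=> atom_a; have [k Nk a_def] := atom_is_power r_gt0 atom_a.
  have ones : exps_in N (nseq (m ^ k - 1) 0%N) by move=> j /nseqP [-> _].
  have split_a : a = r ^+ 0 + psum r (nseq (m ^ k - 1) 0%N).
    rewrite a_def psum_nseq expr0 mulr1 natrB ?expn_gt0 ?m_gt0 //.
    by rewrite r_def natrX addrC subrK.
  case: atom_a => _ _ /(_ _ _ (power_in_S r N0) (psum_in_S r ones) split_a).
  by rewrite expr0 => -[/eqP|rest0]; [rewrite oner_eq0 | rewrite split_a rest0 addr0 expr0].
have all_ones w : is_factorization (S_rN r N) x w -> w = nseq (size w) 1 /\ x = (size w)%:R.
  move=> [atoms <-]; have w_def : w = nseq (size w) 1.
    by apply/all_pred1P/allP => a /atoms /atom_one ->.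
  by split => //; rewrite {1}w_def big_nseq; elim: (size w) => //= k ->; rewrite addrC natr1.
have [z_def x_z] := all_ones z fz; have [z'_def x_z'] := all_ones z' fz'.
have : size z = size z' by apply/eqP; rewrite -(eqr_nat rat) -x_z -x_z'.
by move=> sz; rewrite z_def z'_def sz; apply: chain_refl.
Qed.

(* When r = 1/d, no generator is an atom (r^k = d^dl * r^(k+dl)), so 1 has
   no factorization and S_{r,N} is not atomic. *)
Lemma unit_numerator_not_atomic (r : rat) N (d dl : nat) : r = 1%:R / d%:R -> (1 < d)%N ->
  N 0%N -> N dl -> (0 < dl)%N -> (forall a b, N a -> N b -> N (a + b)%N) ->
  ~ atomic (S_rN r N).
Proof.
move=> r_def d_gt1 N0 Ndl dl_gt0 Nadd atomic_S.
have r_gt0 : 0 < r by rewrite r_def divr_gt0 // ltr0n ltnW.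
have S1 : S_rN r N 1 by rewrite -(expr0 r); apply: power_in_S.
have [[|a z] [atoms z_sum]] := atomic_S 1 S1.
  by move: z_sum; rewrite big_nil => /eqP; rewrite eq_sym oner_eq0.
have [k Nk a_def] := atom_is_power r_gt0 (atoms a (mem_head _ _)).
have [_ _ irr] := atoms a (mem_head _ _).
have Nkdl : N (k + dl)%N by apply: Nadd.
have tops : exps_in N (nseq (d ^ dl - 1) (k + dl)) by move=> j /nseqP [-> _].
have split_a : a = r ^+ (k + dl) + psum r (nseq (d ^ dl - 1) (k + dl)).
  have := exchange_powers r_def (ltnW d_gt1) dl k; rewrite exp1n mul1r a_def => ->.
  have dpow_gt0 : (0 < d ^ dl)%N by rewrite expn_gt0 ltnW.
  by rewrite psum_nseq -{1}(subnK dpow_gt0) natrD mulrDl mul1r addrC.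
have [] := irr _ _ (power_in_S r Nkdl) (psum_in_S r tops) split_a.
- by move/eqP; rewrite expf_eq0 (gt_eqF r_gt0) andbF.
- rewrite psum_nseq => /eqP; rewrite mulf_eq0 expf_eq0 (gt_eqF r_gt0) andbF orbF pnatr_eq0 subn_eq0.
  by rewrite -(exp1n dl) leq_exp2r // leqNgt d_gt1.
Qed.

Lemma pos_rat_ratio (r : rat) : 0 < r -> r = (`|numq r|%N)%:R / (`|denq r|%N)%:R.
Proof.
move=> r_gt0; rewrite -{1}(divq_num_den r) -[numq r]gez0_abs ?numq_ge0 ?ltW //.
by rewrite -[denq r]gez0_abs // ltW.
Qed.

Theorem mainTheorem8 (r : rat) (N : nat -> Prop) (delta0 : nat) :
  0 < r ->
  numerical_monoid N ->
  N delta0 -> (0 < delta0)%N -> (forall k, N k -> (0 < k)%N -> (delta0 <= k)%N) ->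
  atomic (S_rN r N) ->
  ((exists m : nat, r = m%:R) -> catenary_degree_eq (S_rN r N) 0) /\
  (~ (exists m : nat, r = m%:R) ->
     catenary_degree_eq (S_rN r N) (maxn `|numq r| `|denq r| ^ delta0)).
Proof.
move=> r_gt0 [N0 Nadd _] Ndl dl_gt0 dl_min atomic_S; split.
  by move=> [m r_def]; apply: catenary_integer_base r_def r_gt0 N0.
move=> r_not_nat; have r_def := pos_rat_ratio r_gt0.
move: (coprime_num_den r) r_def; set n := `|numq r|%N; set d := `|denq r|%N => co r_def.
have d_gt1 : (1 < d)%N.
  rewrite ltn_neqAle absz_gt0 denq_neq0 andbT; apply/eqP => d1; apply: r_not_nat.
  by exists n; rewrite r_def -d1 divr1.
have n_gt1 : (1 < n)%N.
  rewrite ltn_neqAle absz_gt0 numq_eq0 (gt_eqF r_gt0) andbT; apply/eqP => n1.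
  by apply: (unit_numerator_not_atomic _ d_gt1 N0 Ndl dl_gt0 Nadd atomic_S); rewrite n1.
split; first exact: catenary_upper.
by move=> b; apply: catenary_lower.
Qed.
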